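(* If $G$ is a chordal graph of treewidth $w$ and with a resolving set of size $k$, then $w\leq 3^k$.
   Context: A graph is chordal if it has no induced cycle of length at least $4$. A set $R$ of vertices of a graph $G$ is a resolving set if for each pair $u,v$ of distinct vertices there is $x\in R$ with $d(x,u)\neq d(x,v)$. *)

From mathcomp Require Import all_boot.
Set Implicit Arguments. Unset Strict Implicit. Unset Printing Implicit Defensive.

Section Graphs.
Variable V : finType.

Definition simple_graph (e : rel V) : Prop := symmetric e /\ irreflexive e.

Definition connected_graph (e : rel V) : Prop := forall x y : V, connect e x y.

Definition walkn (e : rel V) (n : nat) (x y : V) : bool :=
  [exists p : n.-tuple V, path e x p && (last x p == y)].

(* graph distance: least n such that a walk of length n exists from x to y
   (in a connected graph such an n is < #|V|; otherwise the value is #|V|) *)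
Definition dist (e : rel V) (x y : V) : nat :=
  find (fun n => walkn e n x y) (iota 0 #|V|).

Definition resolving (e : rel V) (R : {set V}) : Prop :=
  forall u v : V, u != v -> exists2 x, x \in R & dist e x u != dist e x v.

Definition induced_cycle (e : rel V) (s : seq V) : Prop :=
  [/\ uniq s, 4 <= size s, cycle e s &
      forall x y, x \in s -> y \in s -> e x y -> (y == next s x) || (x == next s y)].

Definition chordal (e : rel V) : Prop := forall s : seq V, ~ induced_cycle e s.
End Graphs.

Definition is_tree (n : nat) (t : rel 'I_n.+1) : Prop :=
  [/\ simple_graph t, connected_graph t &
      forall s : seq 'I_n.+1, ~ [/\ uniq s, 3 <= size s & cycle t s]].

Definition tree_decomposition (V : finType) (e : rel V)
  (n : nat) (t : rel 'I_n.+1) (B : 'I_n.+1 -> {set V}) : Prop :=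
  [/\ is_tree t,
      (forall v : V, exists i, v \in B i),
      (forall u v : V, e u v -> exists i, (u \in B i) && (v \in B i)) &
      forall (v : V) (i j : 'I_n.+1), v \in B i -> v \in B j ->
        connect [rel a b | t a b && (v \in B a) && (v \in B b)] i j].

Definition has_td_width (V : finType) (e : rel V) (w : nat) : Prop :=
  exists n (t : rel 'I_n.+1) (B : 'I_n.+1 -> {set V}),
    tree_decomposition e t B /\ (\max_(i < n.+1) #|B i| <= w.+1)%N.

Definition treewidth (V : finType) (e : rel V) (w : nat) : Prop :=
  has_td_width e w /\ forall w', has_td_width e w' -> w <= w'.

(* A chordal graph has a perfect elimination ordering (Dirac), and the closed
   forward neighbourhoods of such an ordering, linked by sending each vertex to
   its first later neighbour, form a tree decomposition whose bags are cliques.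
   Distances from a vertex x to the vertices of a clique take at most two
   consecutive values, so a clique vertex u is determined by the set of x in a
   resolving set R at which u realizes the larger value. Cliques thus have at
   most 2^|R| vertices and the treewidth is at most 2^|R| - 1 <= 3^|R|. *)

From mathcomp Require Import all_boot zify.
Set Implicit Arguments. Unset Strict Implicit. Unset Printing Implicit Defensive.

Lemma next_mkseq (T : eqType) (g : nat -> T) n i :
  {in gtn n &, injective g} -> i < n -> next (mkseq g n) (g i) = g (i.+1 %% n).
Proof.
move=> /mkseq_uniqP g_uniq lt_i_n.
have g_nth : nth (g i) (mkseq g n) i = g i by rewrite nth_mkseq.
have gi_in : g i \in mkseq g n by rewrite -g_nth mem_nth ?size_mkseq.
have gi_idx : index (g i) (mkseq g n) = i by rewrite -{1}g_nth index_uniq ?size_mkseq.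
rewrite next_nth gi_in gi_idx.
case: n lt_i_n {g_uniq g_nth gi_in gi_idx} => // n; rewrite ltnS leq_eqVlt.
case/predU1P => [->|lt_i_n]; first by rewrite modnn /= nth_default // size_map size_iota.
by rewrite modn_small // /= (nth_map 0) ?size_iota // nth_iota.
Qed.

Lemma prev_neq_next (T : eqType) (s : seq T) x :
  uniq s -> 3 <= size s -> x \in s -> prev s x != next s x.
Proof.
move=> s_uniq s_size /rot_to[i q s_rot]; apply/eqP => prev_next.
have : next s (next s x) = x by rewrite -{1}prev_next next_prev.
rewrite -!(next_rot i s_uniq) s_rot.
have: uniq (x :: q) by rewrite -s_rot rot_uniq.
have: 3 <= size (x :: q) by rewrite -s_rot size_rot.
case: q {s_rot} => [|y [|z r]] //= _.
rewrite !inE !negb_or => /andP[/and3P[xy xz _] /andP[/andP[yz _] _]].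
by rewrite eqxx eq_sym (negPf xy) eqxx => zx; rewrite zx eqxx in xz.
Qed.

Section Graph.
Variables (V : finType) (e : rel V).
Hypotheses (e_sym : symmetric e) (e_irr : irreflexive e).

Definition clique (K : {set V}) := {in K &, forall u v, u != v -> e u v}.

Definition simplicial (U : {set V}) (v : V) := v \in U /\ clique [set u in U | e v u].

Definition perfect_elimination (s : seq V) :=
  forall v, clique [set u in s | e v u && (index v s < index u s)].

Definition induced (W : {set V}) : rel V := [rel x y | e x y && (x \in W) && (y \in W)].

Lemma clique_sub (K1 K2 : {set V}) : K1 \subset K2 -> clique K2 -> clique K1.
Proof. by move=> /subsetP K12 K2_clique u v /K12 uK /K12 vK; apply: K2_clique. Qed.

Lemma clique_or_nonadj (K : {set V}) :
  clique K \/ exists x y, [/\ x \in K, y \in K, x != y & ~~ e x y].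
Proof.
have [/existsP[x /existsP[y /and4P[xK yK xy nxy]]]|no_pair] :=
  boolP [exists x, exists y, [&& x \in K, y \in K, x != y & ~~ e x y]].
  by right; exists x, y.
left=> x y xK yK xy; apply/negPn/negP => nxy; case/negP: no_pair.
by apply/existsP; exists x; apply/existsP; exists y; rewrite xK yK xy.
Qed.

Lemma induced_sym (W : {set V}) : symmetric (induced W).
Proof. by move=> x y; rewrite /induced /= e_sym -!andbA [(x \in W) && _]andbC. Qed.

Lemma path_induced_sub (W : {set V}) x p : path (induced W) x p -> {subset p <= W}.
Proof.
elim: p x => //= y p IHp x /andP[/andP[_ yW] yp] z.
by rewrite inE => /predU1P[->|/(IHp y yp)].
Qed.

Lemma induced_cycle_mkseq (g : nat -> V) n :
  4 <= n -> {in gtn n &, injective g} ->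
  (forall i, i < n -> e (g i) (g (i.+1 %% n))) ->
  (forall i j, i < j < n -> e (g i) (g j) -> (j == i.+1) || (i == 0) && (j == n.-1)) ->
  induced_cycle e (mkseq g n).
Proof.
move=> n_ge4 g_inj g_cycle g_chords.
have mem_g x : x \in mkseq g n -> exists2 i, i < n & x = g i.
  by case/mapP=> i; rewrite mem_iota => ? ->; exists i.
have g_uniq : uniq (mkseq g n) by apply/mkseq_uniqP.
split=> //; first by rewrite size_mkseq.
  by apply: cycle_from_next => // _ /mem_g[i lt_in ->]; rewrite next_mkseq // g_cycle.
move=> _ _ /mem_g[i lt_in ->] /mem_g[j lt_jn ->].
wlog le_ij : i j lt_in lt_jn / i <= j.
  move=> wlog_ij; have [|/ltnW le_ji] := leqP i j; first exact: wlog_ij.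
  by rewrite e_sym orbC; apply: wlog_ij.
move=> e_ij; rewrite !next_mkseq //.
have [eq_ij|ne_ij] := eqVneq i j; first by rewrite eq_ij e_irr in e_ij.
have /orP[/eqP j_def|/andP[/eqP i0 /eqP jn]] := g_chords i j ltac:(lia) e_ij.
  by rewrite j_def modn_small -?j_def ?eqxx.
by rewrite i0 jn prednK ?modnn ?eqxx ?orbT //; lia.
Qed.

Section Chordal.
Hypothesis e_chordal : chordal e.

(* A shortest detour closes through a into an induced cycle, so chordal graphs
   have no detour at all. *)
Record detour (a : V) (m : nat) (f : nat -> V) : Prop := Detour {
  detour_first : e a (f 0);
  detour_last : e a (f m.+1);
  detour_ends_neq : f 0 != f m.+1;
  detour_ends_nadj : ~~ e (f 0) (f m.+1);
  detour_step : forall i, i <= m -> e (f i) (f i.+1);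
  detour_avoid : forall i, 0 < i <= m -> (f i != a) && ~~ e a (f i) }.

Lemma detour_shorten a m f i j : detour a m f -> i.+1 < j <= m.+1 -> e (f i) (f j) ->
  detour a (m - (j - i.+1)) (fun k => if k <= i then f k else f (k + (j - i.+1))).
Proof.
move=> [f_first f_last ends_neq ends_nadj f_step f_avoid] lt_ij e_ij.
have end_shift : (m - (j - i.+1)).+1 + (j - i.+1) = m.+1 by lia.
have end_gt_i : ((m - (j - i.+1)).+1 <= i) = false by lia.
split=> [||||k le_k|k lt_k] //=; rewrite ?end_gt_i ?end_shift //.
- case: (ltngtP k i) => [lt_ki|lt_ik|->].
  + by apply: f_step; lia.
  + by rewrite addSn; apply: f_step; lia.
  + by rewrite (_ : i.+1 + _ = j) //; lia.
- by case: ifP => _; apply: f_avoid; lia.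
Qed.

Lemma shortest_detour_chordless a m f : detour a m f ->
    (forall m' g, m' < m -> ~ detour a m' g) ->
  forall i j, i.+1 < j <= m.+1 -> ~~ e (f i) (f j).
Proof.
move=> f_detour f_min i j lt_ij; apply/negP => e_ij.
by apply: f_min (detour_shorten f_detour lt_ij e_ij); lia.
Qed.

Section ChordlessDetour.
Variables (a : V) (m : nat) (f : nat -> V).
Hypotheses (f_detour : detour a m f)
  (f_chordless : forall i j, i.+1 < j <= m.+1 -> ~~ e (f i) (f j)).

Lemma chordless_detour_inj : {in gtn m.+2 &, injective f}.
Proof.
have [_ _ ends_neq _ f_step _] := f_detour.
move=> i j /[!inE] lt_i lt_j.
wlog lt_ij : i j lt_i lt_j / i < j.
  move=> wlog_ij eq_f; case: (ltngtP i j) => [lt_ij|lt_ji|] //.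
    exact: wlog_ij eq_f.
  exact/esym/(wlog_ij j i).
move=> eq_f; exfalso.
have [le_jm|gt_jm] := leqP j m.
  by have := @f_chordless i j.+1 ltac:(lia); rewrite eq_f f_step.
have j_last : j = m.+1 by lia.
have [i0|i_pos] := posnP i; first by move: ends_neq; rewrite -j_last -eq_f i0 eqxx.
have := @f_chordless i.-1 m.+1 ltac:(lia).
by rewrite -j_last -eq_f -{2}(prednK i_pos) f_step //; lia.
Qed.

Lemma detour_neq_apex k : k < m.+2 -> f k != a.
Proof.
have [f_first f_last _ _ _ f_avoid] := f_detour.
move=> lt_k; apply/eqP => fk_a.
have [k0|k_pos] := posnP k; first by move: f_first; rewrite -k0 fk_a e_irr.
have [k_last|ne_k] := eqVneq k m.+1; first by move: f_last; rewrite -k_last fk_a e_irr.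
by move: (f_avoid k ltac:(lia)); rewrite fk_a eqxx.
Qed.

Lemma chordless_detour_induced_cycle :
  induced_cycle e (mkseq (fun k => if k < m.+2 then f k else a) m.+3).
Proof.
have [f_first f_last _ ends_nadj f_step f_avoid] := f_detour.
have m_pos : 0 < m by case: (posnP m) ends_nadj => // m0; rewrite m0 f_step.
apply: induced_cycle_mkseq => //.
- move=> i j /[!inE] lt_i lt_j.
  case: ifP => lt_i'; case: ifP => lt_j'.
  + exact: chordless_detour_inj.
  + by move=> fi_a; move: (detour_neq_apex lt_i'); rewrite fi_a eqxx.
  + by move=> a_fj; move: (detour_neq_apex lt_j'); rewrite a_fj eqxx.
  + lia.
- move=> i lt_i; have [lt_im|ge_im] := ltnP i m.+1.
    by rewrite modn_small ?ifT //; [apply: f_step | |]; lia.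
  have [i_last|i_apex] : i = m.+1 \/ i = m.+2 by lia.
    by rewrite i_last modn_small // ltnSn ltnn e_sym.
  by rewrite i_apex modnn ltnn.
- move=> i j lt_ij; rewrite ifT; last by lia.
  have [lt_j|ge_j] := ltnP j m.+2.
    move=> e_ij; have [lt_ij1|le_ji1] := ltnP i.+1 j.
      by move: (@f_chordless i j ltac:(lia)); rewrite e_ij.
    by apply/orP; left; apply/eqP; lia.
  move=> e_ia.
  have [i0|i_pos] := posnP i; first by rewrite i0 /=; apply/orP; right; apply/eqP; lia.
  have [i_last|ne_i] := eqVneq i m.+1; first by apply/orP; left; apply/eqP; lia.
  by move: (f_avoid i ltac:(lia)); rewrite e_sym e_ia andbF.
Qed.
End ChordlessDetour.

Lemma no_detour a m f : ~ detour a m f.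
Proof.
elim/ltn_ind: m f => m IH f f_detour.
have f_chordless := shortest_detour_chordless f_detour (fun m' g lt_m => IH m' lt_m g).
exact: e_chordal (chordless_detour_induced_cycle f_detour f_chordless).
Qed.

Lemma chordal_path_meets_nbr a x y p : e a x -> e a y -> x != y -> ~~ e x y ->
  path e x (rcons p y) -> has (fun z => (z == a) || e a z) p.
Proof.
move=> ax ay xy nxy xpy; apply/negPn/negP; rewrite -all_predC => /allP p_avoid.
apply: (@no_detour a (size p) (nth y (x :: p))).
have nth_end : nth y p (size p) = y by rewrite nth_default.
split=> /=; rewrite ?nth_end //.
- move=> i le_ip; move/(pathP y): xpy => /(_ i); rewrite size_rcons ltnS => /(_ le_ip).
  by rewrite -[x :: rcons p y]/(rcons (x :: p) y) !nth_rcons_default.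
- move=> [|i] //= lt_ip.
  by have /p_avoid := mem_nth y lt_ip; rewrite /= negb_or.
Qed.

Section Component.
Variables (U : {set V}) (a b : V).
Hypotheses (a_in_U : a \in U) (b_in_U : b \in U) (b_neq_a : b != a) (b_nadj_a : ~~ e a b).

Let W := [set u in U | (u != a) && ~~ e a u].
Let C := [set u | connect (induced W) b u].
Let S := [set u in U :\: C | [exists c in C, e c u]].

Lemma component_sub_far : C \subset W.
Proof.
apply/subsetP => u; rewrite inE => /connectP[p bp ->].
have bW : b \in W by rewrite inE b_in_U b_neq_a b_nadj_a.
by move: (mem_last b p); rewrite inE => /predU1P[->|/(path_induced_sub bp)].
Qed.

Lemma component_closed c u : c \in C -> u \in W -> e c u -> u \in C.
Proof.
move=> cC uW cu; rewrite inE; apply: connect_trans (_ : connect _ b c) (connect1 _).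
  by rewrite inE in cC.
by rewrite /induced /= cu uW (subsetP component_sub_far).
Qed.

Lemma boundary_nbr u : u \in S -> e a u.
Proof.
rewrite !inE => /andP[/andP[uC uU] /existsP[c /andP[cC cu]]].
have := subsetP component_sub_far c cC; rewrite inE => /and3P[_ ca nac].
apply: contraR uC => nau.
have uW : u \in W.
  by rewrite inE uU nau andbT; apply: contraNneq nac => ua; rewrite e_sym -ua.
by have := component_closed cC uW cu; rewrite inE.
Qed.

Lemma boundary_clique : clique S.
Proof.
move=> u1 u2 u1S u2S u12; apply/negPn/negP => nu12.
move: (u1S) (u2S); rewrite !inE.
move=> /andP[_ /existsP[c1 /andP[c1C c1u1]]] /andP[_ /existsP[c2 /andP[c2C c2u2]]].
have /connectP[q c1q c2_last] : connect (induced W) c1 c2.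
  move: c1C c2C; rewrite !inE (sym_connect_sym (induced_sym W)).
  exact: connect_trans.
have q_far : {subset c1 :: q <= W}.
  move=> z; rewrite inE => /predU1P[->|/(path_induced_sub c1q)//].
  exact: (subsetP component_sub_far).
have meets := chordal_path_meets_nbr (boundary_nbr u1S) (boundary_nbr u2S) u12 nu12
  (p := c1 :: q).
have /hasP[z /q_far] : has (fun z => (z == a) || e a z) (c1 :: q).
  apply: meets; rewrite rcons_path /= -c2_last [e u1 c1]e_sym c1u1 c2u2 andbT.
  by apply: sub_path c1q => x y /andP[/andP[]].
by rewrite inE => /and3P[_ /negPf-> /negPf->].
Qed.

Lemma card_component_boundary : #|C :|: S| < #|U|.
Proof.
apply: proper_card; apply/properP; split.
  apply/subsetP => u; rewrite inE => /orP[/(subsetP component_sub_far)|]; rewrite !inE.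
    by case/andP.
  by case/andP=> /andP[].
exists a => //; rewrite inE negb_or; apply/andP; split.
  by apply/negP => /(subsetP component_sub_far); rewrite inE eqxx andbF.
by apply/negP => /boundary_nbr; rewrite e_irr.
Qed.

Lemma component_simplicial v : v \in C -> simplicial (C :|: S) v -> simplicial U v.
Proof.
move=> vC [_ v_simp]; have := subsetP component_sub_far v vC; rewrite inE => /andP[vU _].
have nbr_in u : u \in U -> e v u -> u \in C :|: S.
  move=> uU vu; rewrite inE; case: (boolP (u \in C)) => //= uC.
  by rewrite inE in_setD uC uU /=; apply/existsP; exists v; rewrite vC.
split=> // x y; rewrite !inE => /andP[xU vx] /andP[yU vy].
by apply: v_simp; rewrite inE ?vx ?vy nbr_in.
Qed.

Lemma dirac_component : exists C S : {set V}, [/\ b \in C, #|C :|: S| < #|U|, clique S &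
  {in C, forall v, simplicial (C :|: S) v -> simplicial U v /\ (v != a) && ~~ e a v}].
Proof.
exists C, S; split; rewrite ?inE ?connect0 //.
- exact: card_component_boundary.
- exact: boundary_clique.
move=> v vC v_simp; split; first exact: component_simplicial.
by have := subsetP component_sub_far v vC; rewrite inE => /andP[].
Qed.
End Component.

Lemma simplicial_outside_nbr (U : {set V}) a b : a \in U -> b \in U -> b != a -> ~~ e a b ->
  exists2 v, simplicial U v & (v != a) && ~~ e a v.
Proof.
have [n] := ubnP #|U|; elim: n U a b => // n IH U a b ltUn aU bU ba nab.
have [C [S [bC ltH S_clique lift]]] := dirac_component aU bU ba nab.
suff [v vC /(lift v vC)[]] : exists2 v, v \in C & simplicial (C :|: S) v by exists v.
have {}IH x y := IH (C :|: S) x y (leq_trans ltH (ltnSE ltUn)).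
have [H_clique|[x [y [xH yH xy nxy]]]] := clique_or_nonadj (C :|: S).
  exists b => //; split; first by rewrite inE bC.
  by apply: clique_sub H_clique; apply/subsetP => u; rewrite inE => /andP[].
(* Two nonadjacent simplicial vertices of G[C :|: S] cannot both lie in the
   clique S. *)
rewrite eq_sym in xy.
have [v1 v1_simp /andP[v1x nxv1]] := IH x y xH yH xy nxy.
rewrite eq_sym in v1x; rewrite e_sym in nxv1.
have [v2 v2_simp /andP[v2v1 nv1v2]] := IH v1 x v1_simp.1 xH v1x nxv1.
have [v1C|v1S] := boolP (v1 \in C); first by exists v1.
have [v2C|v2S] := boolP (v2 \in C); first by exists v2.
have [[v1H _] [v2H _]] := (v1_simp, v2_simp).
rewrite in_setU (negPf v1S) in v1H; rewrite in_setU (negPf v2S) in v2H.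
by rewrite S_clique // eq_sym in nv1v2.
Qed.

Lemma simplicial_exists (U : {set V}) : U != set0 -> exists v, simplicial U v.
Proof.
case/set0Pn => a aU; have [U_clique|[x [y [xU yU xy nxy]]]] := clique_or_nonadj U.
  exists a; split=> //; apply: clique_sub U_clique.
  by apply/subsetP => u; rewrite inE => /andP[].
rewrite eq_sym in xy.
by have [v v_simp _] := simplicial_outside_nbr xU yU xy nxy; exists v.
Qed.

Lemma perfect_elimination_exists (U : {set V}) :
  exists s, [/\ uniq s, s =i U & perfect_elimination s].
Proof.
have [n] := ubnP #|U|; elim: n U => // n IH U ltUn.
have [->|U_neq0] := eqVneq U set0.
  by exists [::]; split=> // [x|v x y]; rewrite !inE in_nil.
have [v [vU v_simp]] := simplicial_exists U_neq0.
have [|s [s_uniq sU s_peo]] := IH (U :\ v).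
  by move: ltUn; rewrite (cardsD1 v U) vU.
exists (v :: s); split.
- by rewrite /= sU in_setD1 eqxx s_uniq.
- by move=> x; rewrite inE sU in_setD1; case: eqVneq => // ->.
move=> x; have [->|xv] := eqVneq x v.
  apply: clique_sub v_simp; apply/subsetP => u; rewrite !inE /= eqxx.
  case/andP=> /predU1P[->|us] /andP[vu _]; first by rewrite e_irr in vu.
  by rewrite vu andbT; move: us; rewrite sU in_setD1 => /andP[].
have idx y : y != v -> index y (v :: s) = (index y s).+1.
  by move=> yv; rewrite /= eq_sym (negPf yv).
apply: clique_sub (s_peo x); apply/subsetP => u; rewrite !inE idx //.
case/andP=> /predU1P[->|us]; first by rewrite /= eqxx ltn0 andbF.
have uv : u != v by apply: contraTneq us => ->; rewrite sU in_setD1 eqxx.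
by rewrite idx // ltnS us.
Qed.
End Chordal.
End Graph.

Section Distance.
Variables (V : finType) (e : rel V).
Hypothesis e_connected : connected_graph e.

Lemma walknP n x y :
  reflect (exists p, [/\ size p = n, path e x p & last x p = y]) (walkn e n x y).
Proof.
apply: (iffP existsP) => [[p /andP[xp /eqP py]]|[p [<- xp py]]].
  by exists (val p); rewrite size_tuple.
by exists (in_tuple p); rewrite /= xp py eqxx.
Qed.

Lemma dist_walk x y : dist e x y < #|V| /\ walkn e (dist e x y) x y.
Proof.
have /connectP[p xp py] := e_connected x y.
case: (shortenP xp) py => q xq q_uniq _ /esym qy.
have short : has (fun n => walkn e n x y) (iota 0 #|V|).
  apply/hasP; exists (size q); last by apply/walknP; exists q.
  by rewrite mem_iota /=; have := max_card (mem (x :: q)); rewrite (card_uniqP q_uniq).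
rewrite /dist; move: (short); rewrite has_find size_iota => lt_dist; split=> //.
by have := nth_find 0 short; rewrite nth_iota.
Qed.

Lemma dist_min n x y : walkn e n x y -> n < #|V| -> dist e x y <= n.
Proof.
move=> xy_walk lt_n; rewrite leqNgt; apply/negP => lt_dist.
by have := before_find 0 lt_dist; rewrite nth_iota // add0n xy_walk.
Qed.

Lemma dist_edge x u v : e u v -> dist e x v <= (dist e x u).+1.
Proof.
move=> uv; have [lt_u /walknP[p [size_p xp pu]]] := dist_walk x u.
have [lt_v _] := dist_walk x v.
have [lt_u1|ge_u1] := ltnP (dist e x u).+1 #|V|; last exact: leq_trans (ltnW lt_v) ge_u1.
apply: dist_min lt_u1; apply/walknP; exists (rcons p v).
by rewrite size_rcons size_p rcons_path xp pu uv last_rcons.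
Qed.

Lemma resolving_clique_card (R K : {set V}) : resolving e R -> clique e K ->
  #|K| <= 2 ^ #|R|.
Proof.
move=> R_res K_clique.
pose closer u := [set x in R | [exists v in K, dist e x v < dist e x u]].
(* On K, dist e x takes at most two consecutive values, and x \in closer u
   says that u takes the larger one. *)
have dist_K x u v : u \in K -> v \in K -> dist e x v <= (dist e x u).+1.
  move=> uK vK; have [->|uv] := eqVneq u v; first exact: leqnSn.
  exact/dist_edge/K_clique.
have closer_inj : {in K &, injective closer}.
  move=> u v uK vK closer_uv; apply/eqP/negPn/negP => uv.
  have [x xR ne_dist] := R_res u v uv.
  wlog lt_uv : u v uK vK closer_uv uv ne_dist / dist e x u < dist e x v.
    move=> wlog_uv; case: (ltngtP (dist e x u) (dist e x v)) => [|lt_vu|eq_dist].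
    - exact: wlog_uv.
    - by apply: (wlog_uv v u) => //; rewrite eq_sym.
    - by rewrite eq_dist eqxx in ne_dist.
  have : x \in closer v by rewrite inE xR; apply/existsP; exists u; rewrite uK.
  rewrite -closer_uv inE xR => /existsP[w /andP[wK lt_w]].
  by have := dist_K x w v wK vK; lia.
rewrite -(card_in_imset closer_inj) -card_powerset; apply: subset_leq_card.
apply/subsetP => _ /imsetP[u _ ->]; rewrite powersetE.
by apply/subsetP => x; rewrite inE => /andP[].
Qed.
End Distance.

Section ParentTree.
Variables (n : nat) (parent : nat -> nat).
Hypothesis parent_gt : forall i, i < n -> i < parent i <= n.

Definition parent_tree : rel 'I_n.+1 :=
  [rel i j : 'I_n.+1 | (i < j) && (parent i == j) || (j < i) && (parent j == i)].

Lemma parent_tree_sym : symmetric parent_tree.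
Proof. by move=> i j; rewrite /parent_tree /= orbC. Qed.

Lemma connect_parent_tree_max i : connect parent_tree i ord_max.
Proof.
have [m] := ubnP (n - i); elim: m i => // m IH i lt_m.
have [lt_in|ge_in] := ltnP i n; last first.
  by apply: eq_connect0; apply/val_inj => /=; have := ltn_ord i; lia.
have /andP[lt_i le_n] := parent_gt lt_in.
apply: connect_trans (connect1 _) (IH (Ordinal (le_n : parent i < n.+1)) _).
  by rewrite /parent_tree /= lt_i eqxx.
by rewrite /=; lia.
Qed.

Lemma parent_tree_acyclic s : ~ [/\ uniq s, 3 <= size s & cycle parent_tree s].
Proof.
case: s => [|i0 s] [s_uniq s_size s_cycle] //.
have [i i_in i_min] := arg_minnP (fun i : 'I_n.+1 => val i) (mem_head i0 s).
have to_parent j : j \in i0 :: s -> parent_tree j i -> parent i = j.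
  by move=> js; rewrite /parent_tree /= (leq_gtF (i_min j js)) /= => /andP[_ /eqP].
have prev_par := to_parent _ (etrans (mem_prev _ _) i_in) (prev_cycle s_cycle i_in).
have next_par := to_parent _ (etrans (mem_next _ _) i_in)
  (etrans (parent_tree_sym _ _) (next_cycle s_cycle i_in)).
apply: (elimN eqP (prev_neq_next s_uniq s_size i_in)); apply: ord_inj.
by rewrite -prev_par -next_par.
Qed.

Lemma is_tree_parent_tree : is_tree parent_tree.
Proof.
split; [split | | exact: parent_tree_acyclic].
- exact: parent_tree_sym.
- by move=> i; rewrite /parent_tree /= ltnn.
move=> i j; apply: connect_trans (connect_parent_tree_max i) _.
by rewrite (sym_connect_sym parent_tree_sym) connect_parent_tree_max.
Qed.
End ParentTree.

Section EliminationTree.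
Variables (V : finType) (e : rel V) (x0 : V) (s : seq V).
Hypotheses (e_sym : symmetric e) (s_uniq : uniq s) (s_all : forall x, x \in s)
  (s_peo : perfect_elimination e s).

Let n := (size s).-1.
Let vert i := nth x0 s i.

Let size_s : size s = n.+1.
Proof. by rewrite prednK // -has_predT; apply/hasP; exists x0. Qed.

Let index_lt u : index u s < n.+1.
Proof. by rewrite -size_s index_mem. Qed.

Let vert_index u : vert (index u s) = u.
Proof. exact: nth_index. Qed.

Let index_vert i : i < n.+1 -> index (vert i) s = i.
Proof. by move=> lt_i; rewrite index_uniq ?size_s. Qed.

(* The first later neighbour of vert i, or the root n if there is none. *)
Definition elim_parent i :=
  minn n (find (fun j => (i < j) && e (vert i) (vert j)) (iota 0 n.+1)).

Definition elim_bag i := [set u | (u == vert i) || e (vert i) u && (i < index u s)].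

Lemma elim_parent_gt i : i < n -> i < elim_parent i <= n.
Proof.
move=> lt_in; rewrite /elim_parent geq_minl andbT.
set P := fun j => _ && _; set f := find P _.
rewrite leq_min lt_in /=.
have [lt_f|] := ltnP f n.+1; last lia.
have has_P : has P (iota 0 n.+1) by rewrite has_find size_iota.
by have := nth_find 0 has_P; rewrite nth_iota // add0n /P => /andP[].
Qed.

Lemma elim_parent_first i j : i < j < n.+1 -> e (vert i) (vert j) ->
  [/\ i < elim_parent i, elim_parent i <= j & e (vert i) (vert (elim_parent i))].
Proof.
move=> /andP[lt_ij lt_jn] e_ij; rewrite /elim_parent; set P := fun j => _ && _.
have has_P : has P (iota 0 n.+1).
  by apply/hasP; exists j; rewrite ?mem_iota //= /P lt_ij.
have le_fj : find P (iota 0 n.+1) <= j.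
  rewrite leqNgt; apply/negP => lt_jf.
  by have := before_find 0 lt_jf; rewrite nth_iota // add0n /P lt_ij e_ij.
have lt_fn : find P (iota 0 n.+1) < n.+1 by move: has_P; rewrite has_find size_iota.
rewrite (minn_idPr _); last by rewrite -ltnS.
by have := nth_find 0 has_P; rewrite nth_iota // add0n => /andP[-> ->].
Qed.

Lemma elim_bag_clique i : i < n.+1 -> clique e (elim_bag i).
Proof.
move=> lt_i u v; rewrite !inE.
move=> /predU1P[->|/andP[iu lt_iu]] /predU1P[->|/andP[iv lt_iv]] uv.
- by rewrite eqxx in uv.
- exact: iv.
- by rewrite e_sym.
by apply: (@s_peo (vert i) u v) uv; rewrite inE s_all index_vert // ?iu ?iv.
Qed.

Lemma elim_bag_parent i v : v \in elim_bag i -> v != vert i ->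
  i < elim_parent i <= index v s /\ v \in elim_bag (elim_parent i).
Proof.
rewrite inE => /predU1P[->|/andP[iv lt_iv] _]; first by rewrite eqxx.
have lt_ivn : i < index v s < n.+1 by rewrite lt_iv index_lt.
have [lt_ip le_pv ip] := elim_parent_first lt_ivn (etrans (congr1 _ (vert_index v)) iv).
split; first by rewrite lt_ip.
have [eq_pv|ne_pv] := eqVneq (elim_parent i) (index v s).
  by rewrite inE eq_pv vert_index eqxx.
have lt_pv : elim_parent i < index v s by rewrite ltn_neqAle ne_pv.
have lt_pn : elim_parent i < n.+1 := leq_ltn_trans le_pv (index_lt v).
rewrite inE lt_pv andbT; apply/orP; right.
have lt_in := ltn_trans lt_iv (index_lt v).
apply: (@s_peo (vert i)); rewrite ?inE ?s_all ?ip ?iv ?index_vert //=.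
by apply: contraNneq ne_pv => <-; rewrite index_vert.
Qed.

Lemma elim_bag_connect v (i : 'I_n.+1) : v \in elim_bag i ->
  connect [rel a b | parent_tree elim_parent a b && (v \in elim_bag a) && (v \in elim_bag b)]
    i (Ordinal (index_lt v)).
Proof.
have [m] := ubnP (index v s - i); elim: m i => // m IH i lt_m vi.
have [v_i|ne_vi] := eqVneq v (vert i).
  by apply: eq_connect0; apply: ord_inj; rewrite /= v_i index_vert.
have [/andP[lt_ip le_pv] vp] := elim_bag_parent vi ne_vi.
have lt_pn : elim_parent i < n.+1 := leq_ltn_trans le_pv (index_lt v).
apply: connect_trans (connect1 _) (IH (Ordinal lt_pn) _ vp); last by rewrite /=; lia.
by rewrite /= vi vp andbT /parent_tree /= lt_ip eqxx.
Qed.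

Lemma elim_tree_decomposition :
  tree_decomposition e (parent_tree elim_parent) (fun i : 'I_n.+1 => elim_bag i).
Proof.
split.
- by apply: is_tree_parent_tree; exact: elim_parent_gt.
- by move=> v; exists (Ordinal (index_lt v)); rewrite inE /= vert_index eqxx.
- move=> u v; wlog le_uv : u v / index u s <= index v s.
    move=> wlog_uv uv; have [|/ltnW le_vu] := leqP (index u s) (index v s).
      by move/wlog_uv; apply.
    have [i /andP[vi ui]] := wlog_uv v u le_vu (etrans (e_sym v u) uv).
    by exists i; rewrite ui vi.
  move=> uv; exists (Ordinal (index_lt u)); rewrite !inE /= vert_index eqxx /=.
  move: le_uv; rewrite leq_eqVlt => /predU1P[eq_uv|->]; last by rewrite uv orbT.
  by rewrite -(vert_index v) -eq_uv vert_index eqxx.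
move=> v i j vi vj; apply: connect_trans (elim_bag_connect vi) _.
rewrite (sym_connect_sym _) ?elim_bag_connect // => a b /=.
by rewrite parent_tree_sym -!andbA [(v \in elim_bag a) && _]andbC.
Qed.
End EliminationTree.

Lemma perfect_elimination_td_width (V : finType) (e : rel V) (s : seq V) w :
  symmetric e -> uniq s -> (forall x, x \in s) -> perfect_elimination e s ->
  (forall K : {set V}, clique e K -> #|K| <= w.+1) -> has_td_width e w.
Proof.
move=> e_sym s_uniq s_all s_peo clique_le.
case: s s_uniq s_all s_peo => [_ s_all _|x0 s' s_uniq s_all s_peo].
  exists 0, (@parent_tree 0 id), (fun _ => set0).
  split; last by apply/bigmax_leqP => i _; rewrite cards0.
  split=> [|v|u v _|v i j]; rewrite ?inE //; last by have := s_all u.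
    exact: is_tree_parent_tree.
  by have := s_all v.
exists (size s'), (parent_tree (elim_parent e x0 (x0 :: s'))).
exists (fun i => elim_bag e x0 (x0 :: s') i).
split; first exact: (elim_tree_decomposition x0 e_sym s_uniq s_all s_peo).
by apply/bigmax_leqP => i _; apply/clique_le/elim_bag_clique.
Qed.

Lemma chordal_resolving_td_width (V : finType) (e : rel V) (R : {set V}) :
  simple_graph e -> connected_graph e -> chordal e -> resolving e R ->
  has_td_width e (2 ^ #|R|).-1.
Proof.
move=> [e_sym e_irr] e_connected e_chordal R_res.
have [s [s_uniq s_all s_peo]] := perfect_elimination_exists e_sym e_irr e_chordal [set: V].
apply: (perfect_elimination_td_width e_sym s_uniq _ s_peo) => [x|K K_clique].
  by rewrite s_all inE.
by rewrite prednK ?expn_gt0 // (resolving_clique_card e_connected R_res K_clique).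
Qed.

Theorem mainTheorem4 (V : finType) (e : rel V) (w k : nat) (R : {set V}) :
  simple_graph e -> connected_graph e -> chordal e ->
  treewidth e w -> resolving e R -> #|R| = k ->
  w <= 3 ^ k.
Proof.
move=> e_simple e_connected e_chordal [_ tw_min] R_res <-.
have td := chordal_resolving_td_width e_simple e_connected e_chordal R_res.
apply: leq_trans (tw_min _ td) (leq_trans (leq_pred _) _).
by case: #|R| => // k'; rewrite leq_exp2r.
Qed.
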